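(* Let $\sigma>0$, $a>0$, $m\in\mathbb R$, and $u_0(x)=\sqrt{\frac{a}{2\pi}}e^{-\frac a2(x-m)^2}$. Then the solution $u$ of $$\partial_t u=\sigma^2\partial_{xx}u+\Big(-x^2+\int_{\mathbb R}y^2u(t,y)\,dy\Big)u,\quad t>0,\ x\in\mathbb R,\qquad u(0,\cdot)=u_0,$$ remains Gaussian for $t>0$ and is given by $$u(t,x)=\sqrt{\frac{a(t)}{2\pi}}e^{-\frac{a(t)}{2}(x-m(t))^2},\quad a(t):=\frac{a\sigma+\tanh(2\sigma t)}{\sigma(1+a\sigma\tanh(2\sigma t))},\quad m(t):=\frac{ma\sigma}{a\sigma\cosh(2\sigma t)+\sinh(2\sigma t)}.$$
   Context: The solution is the unique solution in $C(\mathbb R_+;L^1(\mathbb R))\cap L^1_{\rm loc}((0,\infty);\{g\in L^1(\mathbb R):\int x^2|g|<\infty\})$. *)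

From Stdlib Require Export Reals.
From Coquelicot Require Export Coquelicot.
Open Scope R_scope.

Definition gauss (a m x : R) : R :=
  sqrt (a / (2 * PI)) * exp (- (a / 2) * (x - m) ^ 2).

Definition a_of (sigma a t : R) : R :=
  (a * sigma + tanh (2 * sigma * t)) / (sigma * (1 + a * sigma * tanh (2 * sigma * t))).
Definition m_of (sigma a m t : R) : R :=
  (m * a * sigma) / (a * sigma * cosh (2 * sigma * t) + sinh (2 * sigma * t)).

Definition u_sol (sigma a m t x : R) : R := gauss (a_of sigma a t) (m_of sigma a m t) x.

(* The Gaussian ansatz turns the equation into ordinary differential equations.
   For u = gauss A M, both (d/dt u) / u and (sigma^2 u'' + (int y^2 u - x^2) u) / u
   are quadratic polynomials in x; since int y^2 gauss A M = 1/A + M^2, they agree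
   exactly when A' = 2 (1 - sigma^2 A^2) and M' = -2 M / A, which a_of and m_of solve.

   The Gaussian moments are computed from explicit primitives, which reduces them to
   the limits of Phi t = int_0^t exp (-z^2) dz at +-oo.  The derivatives of Phi t ^ 2
   and of Psi t = int_0^1 exp (-t^2 (1 + y^2)) / (1 + y^2) dy cancel, so
   Phi t ^ 2 + Psi t = Psi 0 = PI / 4, and 0 <= Psi t <= exp (-t^2) gives
   Phi (+-oo) = +- sqrt PI / 2.

   Continuity in L^1 follows from a pointwise bound of |gauss A1 M1 - gauss A2 M2| by
   Gaussians weighted by 1 + x^2: its integral is continuous in the parameters and
   vanishes when they coincide. *)

From Stdlib Require Import Reals Lra Classical.
From Coquelicot Require Import Coquelicot.
Open Scope R_scope.

Local Notation is_RInt_R f l :=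
  (is_RInt_gen f (Rbar_locally m_infty) (Rbar_locally p_infty) l).
Local Notation ex_RInt_R f :=
  (ex_RInt_gen f (Rbar_locally m_infty) (Rbar_locally p_infty)).
Local Notation RInt_R f :=
  (RInt_gen f (Rbar_locally m_infty) (Rbar_locally p_infty)).

Lemma ex_RInt_cont (f : R -> R) (a b : R) :
  (forall x, continuous f x) -> ex_RInt f a b.
Proof. intros Hf. apply (ex_RInt_continuous (V := R_CompleteNormedModule)); auto. Qed.

Lemma is_RInt_R_ext (f g : R -> R) (l : R) :
  (forall x, f x = g x) -> is_RInt_R f l -> is_RInt_R g l.
Proof. intros E. apply is_RInt_gen_ext. apply filter_forall. auto. Qed.

Lemma is_RInt_R_primitive (f F : R -> R) (la lb : R) :
  (forall x, is_derive F x (f x)) -> (forall x, continuous f x) ->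
  is_lim F m_infty la -> is_lim F p_infty lb -> is_RInt_R f (lb - la).
Proof.
  intros HF Hf Hla Hlb.
  assert (DF : forall x, Derive F x = f x) by (intros x; apply is_derive_unique, HF).
  apply (is_RInt_R_ext (Derive F)); auto.
  apply is_RInt_gen_Derive; auto; apply filter_forall; intros ab x _.
  - eexists; apply HF.
  - apply (continuous_ext f); auto.
Qed.

Lemma RInt_le_is_RInt_R (g : R -> R) (L a b : R) :
  (forall x, continuous g x) -> (forall x, 0 <= g x) -> is_RInt_R g L ->
  a <= b -> RInt g a b <= L.
Proof.
  intros Hc Hp HL Hab. apply Rnot_lt_le. intros Hlt.
  assert (Heps : 0 < RInt g a b - L) by lra.
  destruct (HL _ (locally_ball L (mkposreal _ Heps))) as [Qa Qb [Ma HQa] [Mb HQb] Himp].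
  set (a' := Rmin a (Ma - 1)). set (b' := Rmax b (Mb + 1)).
  assert (Ha' : a' <= a) by apply Rmin_l.
  assert (Hb' : b <= b') by apply Rmax_l.
  destruct (Himp a' b') as [I [HI Hball]].
  - apply HQa. unfold a'. generalize (Rmin_r a (Ma - 1)). lra.
  - apply HQb. unfold b'. generalize (Rmax_r b (Mb + 1)). lra.
  - simpl in HI. rewrite <- (is_RInt_unique _ _ _ _ HI) in Hball.
    assert (Hex : forall u v, ex_RInt g u v) by (intros; apply ex_RInt_cont; auto).
    rewrite <- (RInt_Chasles g a' a b'), <- (RInt_Chasles g a b b') in Hball; auto.
    assert (0 <= RInt g a' a) by (apply RInt_ge_0; auto).
    assert (0 <= RInt g b b') by (apply RInt_ge_0; auto).
    apply Rabs_def2 in Hball. simpl in Hball. unfold minus, plus, opp in Hball. simpl in Hball. lra.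
Qed.

Lemma is_lim_incr_bounded_p (F : R -> R) (B : R) :
  (forall x y, x <= y -> F x <= F y) -> (forall x, F x <= B) ->
  exists l : R, is_lim F p_infty l.
Proof.
  intros Hm Hb.
  destruct (completeness (fun v => exists x, v = F x)) as [l [Hub Hlub]].
  - exists B. intros v [x ->]. apply Hb.
  - exists (F 0), 0. reflexivity.
  - exists l. intros P [[eps Heps] HP]. simpl in HP.
    destruct (classic (exists x0, l - eps < F x0)) as [[x0 Hx0] | Hnone].
    + exists x0. intros x Hx. apply HP. change (Rabs (F x - l) < eps). apply Rabs_def1.
      * assert (F x <= l) by (apply Hub; exists x; auto). lra.
      * assert (F x0 <= F x) by (apply Hm; lra). lra.
    + assert (l <= l - eps).
      { apply Hlub. intros v [x ->]. apply Rnot_lt_le. intros Hx. apply Hnone. exists x. auto. }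
      lra.
Qed.

Lemma is_lim_incr_bounded_m (F : R -> R) (B : R) :
  (forall x y, x <= y -> F x <= F y) -> (forall x, B <= F x) ->
  exists l : R, is_lim F m_infty l.
Proof.
  intros Hm Hb.
  destruct (is_lim_incr_bounded_p (fun x => - F (- x)) (- B)) as [l Hl].
  - intros x y Hxy. assert (F (- y) <= F (- x)) by (apply Hm; lra). lra.
  - intros x. specialize (Hb (- x)). lra.
  - exists (- l).
    apply (is_lim_ext (fun x => - (- F (- - x)))).
    { intros x. rewrite !Ropp_involutive. reflexivity. }
    apply (is_lim_opp (fun x => - F (- - x)) m_infty l).
    apply (is_lim_comp (fun x => - F (- x)) Ropp m_infty l p_infty); auto.
    + apply (is_lim_opp (fun x => x) m_infty m_infty), is_lim_id.
    + exists 0. intros x _. discriminate.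
Qed.

Lemma ex_RInt_R_le (f g : R -> R) (L : R) :
  (forall x, continuous f x) -> (forall x, continuous g x) ->
  (forall x, 0 <= f x <= g x) -> is_RInt_R g L -> ex_RInt_R f.
Proof.
  intros Hcf Hcg Hfg HL.
  assert (Hf : forall a b, ex_RInt f a b) by (intros; apply ex_RInt_cont; auto).
  assert (Hg : forall a b, ex_RInt g a b) by (intros; apply ex_RInt_cont; auto).
  assert (Hmaj : forall a b, a <= b -> 0 <= RInt f a b <= L).
  { intros a b Hab. split.
    - apply RInt_ge_0; auto. intros x _. apply Hfg.
    - apply Rle_trans with (RInt g a b).
      + apply RInt_le; auto. intros x _. apply Hfg.
      + apply RInt_le_is_RInt_R; auto. intros x. generalize (Hfg x). lra. }
  set (F := fun y => RInt f 0 y).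
  assert (HFab : forall a b, RInt f a b = F b - F a).
  { intros a b. unfold F. generalize (RInt_Chasles f 0 a b (Hf _ _) (Hf _ _)).
    unfold plus. simpl. lra. }
  assert (Hmono : forall x y, x <= y -> F x <= F y).
  { intros x y Hxy. generalize (Hmaj x y Hxy). rewrite HFab. lra. }
  assert (HF0 : F 0 = 0) by apply (RInt_point (V := R_CompleteNormedModule)).
  assert (Hbnd : forall x, - L <= F x <= L).
  { intros x. destruct (Rle_or_lt 0 x) as [Hx | Hx].
    - generalize (Hmaj 0 x Hx). rewrite HFab, HF0. lra.
    - generalize (Hmaj x 0 (Rlt_le _ _ Hx)). rewrite HFab, HF0. lra. }
  destruct (is_lim_incr_bounded_p F L Hmono (fun x => proj2 (Hbnd x))) as [lb Hlb].
  destruct (is_lim_incr_bounded_m F (- L) Hmono (fun x => proj1 (Hbnd x))) as [la Hla].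
  exists (lb - la). apply (is_RInt_R_primitive f F); auto.
  intros x. apply (is_derive_RInt f F 0); auto.
  apply filter_forall. intros y. apply (RInt_correct (V := R_CompleteNormedModule)), Hf.
Qed.

Lemma is_lim_dominated_0 (f g : R -> R) (x : Rbar) :
  Rbar_locally' x (fun y => Rabs (f y) <= g y) -> is_lim g x 0 -> is_lim f x 0.
Proof.
  intros Hfg Hg. apply (is_lim_le_le_loc (fun y => - g y) g).
  - apply (filter_imp (fun y => Rabs (f y) <= g y)); auto.
    intros y Hy. apply Rabs_le_between, Hy.
  - replace (Finite 0) with (Rbar_opp 0) by (simpl; rewrite Ropp_0; reflexivity).
    apply is_lim_opp, Hg.
  - exact Hg.
Qed.

Lemma is_lim_comp_affine (f : R -> R) (k b : R) (x l : Rbar) :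
  0 < k -> x = p_infty \/ x = m_infty -> is_lim f x l ->
  is_lim (fun y => f (k * (y - b))) x l.
Proof.
  intros Hk Hx Hf.
  apply (is_lim_ext (fun y => f (k * y + - (k * b)))); [intros y; f_equal; ring|].
  apply is_lim_comp_lin; [|lra].
  replace (Rbar_plus (Rbar_mult k x) (- (k * b))) with x; auto.
  assert (Hk' : Rbar_lt 0 k) by exact Hk.
  destruct Hx as [-> | ->]; rewrite Rbar_mult_comm.
  - rewrite (is_Rbar_mult_unique _ _ _ (is_Rbar_mult_p_infty_pos _ Hk')). reflexivity.
  - rewrite (is_Rbar_mult_unique _ _ _ (is_Rbar_mult_m_infty_pos _ Hk')). reflexivity.
Qed.

Lemma is_lim_sq_infty (x : Rbar) :
  x = p_infty \/ x = m_infty -> is_lim (fun y => y ^ 2) x p_infty.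
Proof.
  intros Hx. apply (is_lim_ext (fun y => y * y)); [intros; ring|].
  destruct Hx as [-> | ->].
  - exact (is_lim_mult _ _ p_infty p_infty p_infty (is_lim_id _) (is_lim_id _) I).
  - exact (is_lim_mult _ _ m_infty m_infty m_infty (is_lim_id _) (is_lim_id _) I).
Qed.

Lemma is_lim_exp_neg (f : R -> R) (x : Rbar) :
  is_lim f x p_infty -> is_lim (fun y => exp (- f y)) x 0.
Proof.
  intros Hf. apply (is_lim_comp exp (fun y => - f y) x 0 m_infty).
  - apply is_lim_exp_m.
  - apply (is_lim_opp f x p_infty), Hf.
  - apply filter_forall. discriminate.
Qed.

Lemma is_lim_mul_exp_neg (f : R -> R) (x : Rbar) :
  is_lim f x p_infty -> is_lim (fun y => f y * exp (- f y)) x 0.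
Proof.
  intros Hf. apply (is_lim_ext (fun y => - (- f y * exp (- f y)))); [intros; ring|].
  replace (Finite 0) with (Rbar_opp 0) by (simpl; rewrite Ropp_0; reflexivity).
  apply is_lim_opp.
  apply (is_lim_comp (fun z => z * exp z) (fun y => - f y) x 0 m_infty).
  - apply is_lim_mul_exp_m.
  - apply (is_lim_opp f x p_infty), Hf.
  - apply filter_forall. discriminate.
Qed.

Lemma is_lim_id_exp_neg_sq (x : Rbar) :
  x = p_infty \/ x = m_infty -> is_lim (fun y => y * exp (- y ^ 2)) x 0.
Proof.
  intros Hx. assert (Hsq := is_lim_sq_infty x Hx).
  apply (is_lim_dominated_0 _ (fun y => y ^ 2 * exp (- y ^ 2))).
  - apply (filter_imp (fun y => 1 < y ^ 2)).
    + intros y Hy. rewrite Rabs_mult, (Rabs_right (exp _)) by (apply Rle_ge, Rlt_le, exp_pos).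
      apply Rmult_le_compat_r; [apply Rlt_le, exp_pos|].
      rewrite <- (pow2_abs y) in *. generalize (Rabs_pos y). nra.
    + apply (Hsq (fun z => 1 < z)). exists 1. auto.
  - apply (is_lim_mul_exp_neg (fun y => y ^ 2)), Hsq.
Qed.

Definition Phi (t : R) : R := RInt (fun z => exp (- z ^ 2)) 0 t.
Definition Psi (t : R) : R := RInt (fun y => exp (- t ^ 2 * (1 + y ^ 2)) / (1 + y ^ 2)) 0 1.

Lemma one_add_sq_pos (y : R) : 0 < 1 + y ^ 2.
Proof. generalize (pow2_ge_0 y). lra. Qed.

Lemma continuous_exp_neg_sq (z : R) : continuous (fun z => exp (- z ^ 2)) z.
Proof. apply (ex_derive_continuous (fun z => exp (- z ^ 2))). auto_derive. auto. Qed.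

Lemma is_derive_Phi (t : R) : is_derive Phi t (exp (- t ^ 2)).
Proof.
  apply (is_derive_RInt (fun z => exp (- z ^ 2)) Phi 0).
  - apply filter_forall. intros y.
    apply (RInt_correct (V := R_CompleteNormedModule)), ex_RInt_cont, continuous_exp_neg_sq.
  - apply continuous_exp_neg_sq.
Qed.

Lemma Phi_eq_RInt_scaled (t : R) : Phi t = RInt (fun y => t * exp (- (t * y) ^ 2)) 0 1.
Proof.
  unfold Phi.
  replace (RInt _ 0 t) with (RInt (fun z => exp (- z ^ 2)) (t * 0 + 0) (t * 1 + 0)) by (f_equal; ring).
  rewrite <- (RInt_comp_lin (V := R_CompleteNormedModule))
    by (apply ex_RInt_cont, continuous_exp_neg_sq).
  apply RInt_ext. intros y _. rewrite Rplus_0_r. reflexivity.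
Qed.

Lemma is_derive_Psi_integrand (u y : R) :
  is_derive (fun u => exp (- u ^ 2 * (1 + y ^ 2)) / (1 + y ^ 2)) u
    (-2 * u * exp (- u ^ 2 * (1 + y ^ 2))).
Proof.
  assert (Hy := one_add_sq_pos y).
  auto_derive; [lra|]. cbn [pow]. field. lra.
Qed.

Lemma continuity_2d_pt_Psi_integrand_derive (u y : R) :
  continuity_2d_pt (fun u y => -2 * u * exp (- u ^ 2 * (1 + y ^ 2))) u y.
Proof.
  apply (continuity_2d_pt_ext (fun u y => -2 * u * exp (- (u * u) * (1 + y * y)))).
  { intros u' y'. repeat f_equal; ring. }
  apply continuity_2d_pt_mult.
  - apply continuity_2d_pt_mult; [apply continuity_2d_pt_const | apply continuity_2d_pt_id1].
  - apply continuity_1d_2d_pt_comp; [apply derivable_continuous_pt, derivable_pt_exp|].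
    apply continuity_2d_pt_mult.
    + apply continuity_2d_pt_opp, continuity_2d_pt_mult; apply continuity_2d_pt_id1.
    + apply continuity_2d_pt_plus; [apply continuity_2d_pt_const|].
      apply continuity_2d_pt_mult; apply continuity_2d_pt_id2.
Qed.

Lemma RInt_Psi_integrand_derive (t : R) :
  RInt (fun y => -2 * t * exp (- t ^ 2 * (1 + y ^ 2))) 0 1 = -2 * exp (- t ^ 2) * Phi t.
Proof.
  rewrite Phi_eq_RInt_scaled, <- (RInt_scal (V := R_CompleteNormedModule)).
  - apply RInt_ext. intros y _.
    change (-2 * t * exp (- t ^ 2 * (1 + y ^ 2)) = -2 * exp (- t ^ 2) * (t * exp (- (t * y) ^ 2))).
    replace (- t ^ 2 * (1 + y ^ 2)) with (- t ^ 2 + - (t * y) ^ 2) by ring.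
    rewrite exp_plus. ring.
  - apply ex_RInt_cont. intros y.
    apply (ex_derive_continuous (fun y => t * exp (- (t * y) ^ 2))). auto_derive. auto.
Qed.

Lemma is_derive_Psi (t : R) : is_derive Psi t (-2 * exp (- t ^ 2) * Phi t).
Proof.
  set (f := fun u y => exp (- u ^ 2 * (1 + y ^ 2)) / (1 + y ^ 2)).
  assert (Df : forall u y, Derive (fun u => f u y) u = -2 * u * exp (- u ^ 2 * (1 + y ^ 2))).
  { intros u y. apply is_derive_unique, is_derive_Psi_integrand. }
  rewrite <- RInt_Psi_integrand_derive.
  rewrite (RInt_ext _ (fun y => Derive (fun u => f u y) t)) by (intros y _; symmetry; apply Df).
  apply (is_derive_RInt_param f 0 1 t).
  - apply filter_forall. intros u y _. eexists. apply is_derive_Psi_integrand.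
  - intros y _. apply (continuity_2d_pt_ext (fun u y => -2 * u * exp (- u ^ 2 * (1 + y ^ 2)))).
    + intros u v. symmetry. apply Df.
    + apply continuity_2d_pt_Psi_integrand_derive.
  - apply filter_forall. intros u. apply ex_RInt_cont. intros y.
    apply (ex_derive_continuous (fun y => f u y)). unfold f. auto_derive.
    generalize (one_add_sq_pos y). lra.
Qed.

Lemma is_derive_0_const (K : R -> R) : (forall t, is_derive K t 0) -> forall t, K t = K 0.
Proof.
  intros HK t.
  assert (H := is_RInt_derive K (fun _ => 0) 0 t (fun x _ => HK x) (fun x _ => continuous_const 0 x)).
  apply is_RInt_unique in H. rewrite RInt_const in H.
  unfold scal, minus, plus, opp in H. simpl in H. unfold mult in H. simpl in H. lra.
Qed.

Lemma Psi_0 : Psi 0 = PI / 4.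
Proof.
  unfold Psi. rewrite (RInt_ext _ (fun y => / (1 + y ^ 2))).
  2: { intros y _. replace (- 0 ^ 2 * (1 + y ^ 2)) with 0 by ring. rewrite exp_0. apply Rmult_1_l. }
  rewrite (is_RInt_unique _ _ _ (atan 1 - atan 0)).
  - rewrite atan_1, atan_0. lra.
  - apply (is_RInt_derive atan).
    + intros x _. apply is_derive_Reals, derivable_pt_lim_atan.
    + intros x _. apply (ex_derive_continuous (fun y => / (1 + y ^ 2))). auto_derive.
      generalize (one_add_sq_pos x). lra.
Qed.

Lemma Phi_sq_add_Psi (t : R) : Phi t ^ 2 + Psi t = PI / 4.
Proof.
  rewrite (is_derive_0_const (fun t => Phi t ^ 2 + Psi t)).
  - unfold Phi. rewrite (RInt_point (V := R_CompleteNormedModule)), Psi_0.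
    simpl. unfold zero. simpl. ring.
  - intros s. replace 0 with (INR 2 * exp (- s ^ 2) * Phi s ^ Nat.pred 2 + -2 * exp (- s ^ 2) * Phi s)
      by (simpl; ring).
    apply (is_derive_plus (fun t => Phi t ^ 2)).
    + apply is_derive_pow, is_derive_Phi.
    + apply is_derive_Psi.
Qed.

Lemma exp_le_mono (x y : R) : x <= y -> exp x <= exp y.
Proof. intros [Hlt | ->]; [apply Rlt_le, exp_increasing, Hlt | apply Rle_refl]. Qed.

Lemma Psi_bounds (t : R) : 0 <= Psi t <= exp (- t ^ 2).
Proof.
  assert (Hex : ex_RInt (fun y => exp (- t ^ 2 * (1 + y ^ 2)) / (1 + y ^ 2)) 0 1).
  { apply ex_RInt_cont. intros y.
    apply (ex_derive_continuous (fun y => exp (- t ^ 2 * (1 + y ^ 2)) / (1 + y ^ 2))).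
    auto_derive. generalize (one_add_sq_pos y). lra. }
  split.
  - apply RInt_ge_0; [lra | exact Hex |]. intros y _.
    apply Rlt_le, Rdiv_lt_0_compat; [apply exp_pos | apply one_add_sq_pos].
  - replace (exp (- t ^ 2)) with (RInt (fun _ => exp (- t ^ 2)) 0 1)
      by (rewrite RInt_const; unfold scal; simpl; unfold mult; simpl; ring).
    apply RInt_le; [lra | exact Hex | apply ex_RInt_const |].
    intros y _. assert (Hy := one_add_sq_pos y).
    assert (E : exp (- t ^ 2 * (1 + y ^ 2)) <= exp (- t ^ 2)).
    { apply exp_le_mono. generalize (pow2_ge_0 t) (pow2_ge_0 y). nra. }
    apply (Rmult_le_reg_r (1 + y ^ 2)); [exact Hy|].
    unfold Rdiv. rewrite Rmult_assoc, Rinv_l, Rmult_1_r by lra.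
    generalize (exp_pos (- t ^ 2)) (pow2_ge_0 y). nra.
Qed.

Lemma is_lim_Psi (x : Rbar) : x = p_infty \/ x = m_infty -> is_lim Psi x 0.
Proof.
  intros Hx. apply (is_lim_le_le_loc (fun _ => 0) (fun t => exp (- t ^ 2))).
  - apply filter_forall. intros t. apply Psi_bounds.
  - apply is_lim_const.
  - apply (is_lim_exp_neg (fun t => t ^ 2)), is_lim_sq_infty, Hx.
Qed.

Lemma Phi_sign (t : R) : 0 <= t * Phi t.
Proof.
  assert (Hex := fun a b => ex_RInt_cont _ a b continuous_exp_neg_sq).
  assert (Hpos : forall a b, a <= b -> 0 <= RInt (fun z => exp (- z ^ 2)) a b).
  { intros a b Hab. apply RInt_ge_0; auto. intros z _. apply Rlt_le, exp_pos. }
  unfold Phi. destruct (Rle_or_lt 0 t) as [Ht | Ht].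
  - apply Rmult_le_pos; auto.
  - rewrite <- opp_RInt_swap by auto. generalize (Hpos t 0 (Rlt_le _ _ Ht)).
    unfold opp. simpl. nra.
Qed.

Lemma sqrt_PI_div_4 : sqrt (PI / 4) = sqrt PI / 2.
Proof.
  assert (HPI := PI_RGT_0).
  replace (PI / 4) with ((sqrt PI / 2) ^ 2).
  - apply sqrt_pow2. generalize (sqrt_pos PI). lra.
  - replace ((sqrt PI / 2) ^ 2) with (sqrt PI ^ 2 / 4) by field.
    rewrite pow2_sqrt; lra.
Qed.

Lemma is_lim_abs_Phi (x : Rbar) :
  x = p_infty \/ x = m_infty -> is_lim (fun t => Rabs (Phi t)) x (sqrt PI / 2).
Proof.
  intros Hx. apply (is_lim_ext (fun t => sqrt (PI / 4 - Psi t))).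
  { intros t. rewrite <- (Phi_sq_add_Psi t), <- pow2_abs.
    replace (Rabs (Phi t) ^ 2 + Psi t - Psi t) with (Rabs (Phi t) ^ 2) by ring.
    apply sqrt_pow2, Rabs_pos. }
  replace (sqrt PI / 2) with (sqrt (PI / 4 - 0)) by (rewrite Rminus_0_r; apply sqrt_PI_div_4).
  apply (is_lim_comp_continuous (fun t => PI / 4 - Psi t) sqrt).
  - apply (is_lim_minus' (fun _ => PI / 4) Psi); [apply is_lim_const | apply is_lim_Psi, Hx].
  - apply continuous_sqrt.
Qed.

Lemma is_lim_Phi_p : is_lim Phi p_infty (sqrt PI / 2).
Proof.
  apply (is_lim_ext_loc (fun t => Rabs (Phi t))).
  - exists 0. intros t Ht. apply Rabs_right.
    generalize (Phi_sign t). intros. apply Rle_ge. nra.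
  - apply is_lim_abs_Phi. auto.
Qed.

Lemma is_lim_Phi_m : is_lim Phi m_infty (- (sqrt PI / 2)).
Proof.
  apply (is_lim_ext_loc (fun t => - Rabs (Phi t))).
  - exists 0. intros t Ht. rewrite Rabs_left1, Ropp_involutive; [reflexivity|].
    generalize (Phi_sign t). intros. nra.
  - apply (is_lim_opp (fun t => Rabs (Phi t)) m_infty (sqrt PI / 2)), is_lim_abs_Phi. auto.
Qed.

Definition gauss_amp (A : R) : R := sqrt (A / (2 * PI)).

Lemma gauss_amp_pos (A : R) : 0 < A -> 0 < gauss_amp A.
Proof. intros HA. apply sqrt_lt_R0, Rdiv_lt_0_compat; [exact HA | generalize PI_RGT_0; lra]. Qed.

Definition gauss_cdf (A m x : R) : R := / 2 + Phi (sqrt (A / 2) * (x - m)) / sqrt PI.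

Section Gaussian_density.

Variables A m : R.

Lemma is_derive_gauss (x : R) : is_derive (gauss A m) x (- A * (x - m) * gauss A m x).
Proof. unfold gauss. auto_derive; auto. unfold Rminus. cbn [pow]. field. Qed.

Lemma is_derive_Derive_gauss (x : R) :
  is_derive (Derive (gauss A m)) x ((A ^ 2 * (x - m) ^ 2 - A) * gauss A m x).
Proof.
  apply (is_derive_ext (fun y => - A * (y - m) * gauss A m y)).
  { intros y. symmetry. apply is_derive_unique, is_derive_gauss. }
  unfold gauss. auto_derive; auto. unfold Rminus. cbn [pow]. field.
Qed.

Lemma continuous_gauss (x : R) : continuous (gauss A m) x.
Proof. apply (ex_derive_continuous (gauss A m)). eexists. apply is_derive_gauss. Qed.

Hypothesis HA : 0 < A.

Lemma gauss_pos (x : R) : 0 < gauss A m x.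
Proof.
  apply Rmult_lt_0_compat; [apply gauss_amp_pos, HA | apply exp_pos].
Qed.

Lemma gauss_eq_std (x : R) :
  gauss A m x = sqrt (A / 2) / sqrt PI * exp (- (sqrt (A / 2) * (x - m)) ^ 2).
Proof.
  unfold gauss. rewrite <- sqrt_div_alt by apply PI_RGT_0.
  replace (A / 2 / PI) with (A / (2 * PI)) by (field; generalize PI_RGT_0; lra).
  f_equal. f_equal.
  rewrite Rpow_mult_distr, pow2_sqrt; lra.
Qed.

Lemma is_derive_gauss_cdf (x : R) : is_derive (gauss_cdf A m) x (gauss A m x).
Proof.
  rewrite gauss_eq_std. unfold gauss_cdf.
  auto_derive.
  - eexists. apply is_derive_Phi.
  - rewrite (is_derive_unique _ _ _ (is_derive_Phi _)). unfold Rminus. field.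
    apply Rgt_not_eq, sqrt_lt_R0, PI_RGT_0.
Qed.
End Gaussian_density.

Section Gaussian_moments.

Variables A m : R.
Hypothesis HA : 0 < A.

Let sqrt_A_2_pos : 0 < sqrt (A / 2).
Proof. apply sqrt_lt_R0. lra. Qed.

Let sqrt_PI_pos : 0 < sqrt PI.
Proof. apply sqrt_lt_R0, PI_RGT_0. Qed.

Lemma is_lim_gauss_cdf_p : is_lim (gauss_cdf A m) p_infty 1.
Proof.
  replace 1 with (/ 2 + sqrt PI / 2 / sqrt PI) by (field; lra).
  apply (is_lim_plus' (fun _ => / 2)); [apply is_lim_const|].
  apply (is_lim_scal_r (fun x => Phi (sqrt (A / 2) * (x - m))) (/ sqrt PI) p_infty (sqrt PI / 2)).
  apply (is_lim_comp_affine Phi); auto. apply is_lim_Phi_p.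
Qed.

Lemma is_lim_gauss_cdf_m : is_lim (gauss_cdf A m) m_infty 0.
Proof.
  replace 0 with (/ 2 + - (sqrt PI / 2) / sqrt PI) by (field; lra).
  apply (is_lim_plus' (fun _ => / 2)); [apply is_lim_const|].
  apply (is_lim_scal_r (fun x => Phi (sqrt (A / 2) * (x - m))) (/ sqrt PI) m_infty (- (sqrt PI / 2))).
  apply (is_lim_comp_affine Phi); auto. apply is_lim_Phi_m.
Qed.

Lemma is_RInt_R_gauss : is_RInt_R (gauss A m) 1.
Proof.
  replace 1 with (1 - 0) by ring.
  apply (is_RInt_R_primitive _ (gauss_cdf A m)).
  - apply is_derive_gauss_cdf, HA.
  - apply continuous_gauss.
  - apply is_lim_gauss_cdf_m.
  - apply is_lim_gauss_cdf_p.
Qed.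

Lemma is_lim_add_mul_gauss (x : Rbar) :
  x = p_infty \/ x = m_infty -> is_lim (fun y => (y + m) * gauss A m y) x 0.
Proof.
  intros Hx. set (k := sqrt (A / 2)).
  apply (is_lim_ext (fun y => / sqrt PI * ((k * (y - m)) * exp (- (k * (y - m)) ^ 2))
                              + (2 * m * k / sqrt PI) * exp (- (k * (y - m)) ^ 2))).
  { intros y. rewrite gauss_eq_std by exact HA. fold k. field. lra. }
  replace 0 with (/ sqrt PI * 0 + 2 * m * k / sqrt PI * 0) by ring.
  apply is_lim_plus'.
  - apply (is_lim_scal_l (fun y => (k * (y - m)) * exp (- (k * (y - m)) ^ 2)) _ x 0).
    apply (is_lim_comp_affine (fun z => z * exp (- z ^ 2))); auto.
    apply is_lim_id_exp_neg_sq, Hx.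
  - apply (is_lim_scal_l (fun y => exp (- (k * (y - m)) ^ 2)) _ x 0).
    apply (is_lim_comp_affine (fun z => exp (- z ^ 2))); auto.
    apply (is_lim_exp_neg (fun z => z ^ 2)), is_lim_sq_infty, Hx.
Qed.

Lemma is_derive_add_mul_gauss (x : R) :
  is_derive (fun y => (y + m) * gauss A m y) x (gauss A m x - A * (x ^ 2 - m ^ 2) * gauss A m x).
Proof.
  replace (gauss A m x - A * (x ^ 2 - m ^ 2) * gauss A m x)
    with (1 * gauss A m x + (x + m) * (- A * (x - m) * gauss A m x)) by ring.
  apply (is_derive_mult (fun y => y + m) (gauss A m)).
  - auto_derive; auto; ring.
  - apply is_derive_gauss.
  - intros; apply Rmult_comm.
Qed.

Lemma is_RInt_R_sq_gauss : is_RInt_R (fun y => y ^ 2 * gauss A m y) (1 / A + m ^ 2).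
Proof.
  set (K := fun y => (1 / A + m ^ 2) * gauss_cdf A m y - / A * ((y + m) * gauss A m y)).
  replace (1 / A + m ^ 2) with (((1 / A + m ^ 2) * 1 - / A * 0) - ((1 / A + m ^ 2) * 0 - / A * 0))
    by ring.
  apply (is_RInt_R_primitive _ K).
  - intros x. unfold K.
    replace (x ^ 2 * gauss A m x) with
      ((1 / A + m ^ 2) * gauss A m x - / A * (gauss A m x - A * (x ^ 2 - m ^ 2) * gauss A m x))
      by (field; lra).
    apply (is_derive_minus (fun y => (1 / A + m ^ 2) * gauss_cdf A m y)).
    + apply is_derive_scal, is_derive_gauss_cdf, HA.
    + apply (is_derive_scal (fun y => (y + m) * gauss A m y)), is_derive_add_mul_gauss.
  - intros x. apply (ex_derive_continuous (fun y => y ^ 2 * gauss A m y)).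
    unfold gauss. auto_derive. auto.
  - apply is_lim_minus'.
    + apply (is_lim_scal_l _ _ _ 0), is_lim_gauss_cdf_m.
    + apply (is_lim_scal_l _ _ _ 0), is_lim_add_mul_gauss. auto.
  - apply is_lim_minus'.
    + apply (is_lim_scal_l _ _ _ 1), is_lim_gauss_cdf_p.
    + apply (is_lim_scal_l _ _ _ 0), is_lim_add_mul_gauss. auto.
Qed.

Lemma is_RInt_R_one_add_sq_gauss :
  is_RInt_R (fun y => (1 + y ^ 2) * gauss A m y) (1 + (1 / A + m ^ 2)).
Proof.
  apply (is_RInt_R_ext (fun y => gauss A m y + y ^ 2 * gauss A m y)); [intros; ring|].
  apply (is_RInt_gen_plus (V := R_NormedModule)); [apply is_RInt_R_gauss | apply is_RInt_R_sq_gauss].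
Qed.

End Gaussian_moments.

Lemma abs_exp_sub_le (p q : R) : Rabs (exp p - exp q) <= Rabs (p - q) * (exp p + exp q).
Proof.
  assert (Hle : forall p q, q <= p -> 0 <= exp p - exp q <= (p - q) * exp p).
  { intros p' q' Hqp.
    replace (exp q') with (exp p' * exp (q' - p')) by (rewrite <- exp_plus; f_equal; ring).
    assert (H1 := exp_ineq1_le (q' - p')).
    assert (H2 : exp (q' - p') <= 1) by (rewrite <- exp_0; apply exp_le_mono; lra).
    generalize (exp_pos p'). split; nra. }
  generalize (exp_pos p) (exp_pos q). intros Hp Hq.
  destruct (Rle_or_lt q p) as [Hqp | Hpq].
  - destruct (Hle p q Hqp). rewrite !Rabs_right by lra. nra.
  - destruct (Hle q p (Rlt_le _ _ Hpq)). rewrite !Rabs_left1 by lra. nra.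
Qed.

Definition quad_gap (A1 m1 A2 m2 : R) : R :=
  Rabs (A1 - A2) * (1 + m1 ^ 2) + A2 * Rabs (m1 - m2) * (1 + Rabs m1 + Rabs m2).

Lemma abs_quad_sub_le (A1 m1 A2 m2 x : R) : 0 <= A2 ->
  Rabs (- (A1 / 2) * (x - m1) ^ 2 - - (A2 / 2) * (x - m2) ^ 2) <= quad_gap A1 m1 A2 m2 * (1 + x ^ 2).
Proof.
  intros HA. unfold quad_gap.
  replace (- (A1 / 2) * (x - m1) ^ 2 - - (A2 / 2) * (x - m2) ^ 2) with
    (- ((A1 - A2) * ((x - m1) ^ 2 / 2) + A2 / 2 * ((m1 - m2) * (m1 + m2 - 2 * x)))) by field.
  rewrite Rabs_Ropp. eapply Rle_trans; [apply Rabs_triang|].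
  rewrite !Rabs_mult, (Rabs_right (A2 / 2)), (Rabs_right ((x - m1) ^ 2 / 2))
    by (generalize (pow2_ge_0 (x - m1)); lra).
  assert (B1 : (x - m1) ^ 2 / 2 <= (1 + m1 ^ 2) * (1 + x ^ 2)).
  { generalize (pow2_ge_0 (x + m1)) (pow2_ge_0 (m1 * x)). nra. }
  assert (B2 : Rabs (m1 + m2 - 2 * x) <= (1 + Rabs m1 + Rabs m2) * (1 + x ^ 2)).
  { assert (Rabs (m1 + m2 - 2 * x) <= Rabs m1 + Rabs m2 + 2 * Rabs x).
    { unfold Rminus. eapply Rle_trans; [apply Rabs_triang|].
      rewrite Rabs_Ropp, Rabs_mult, (Rabs_right 2) by lra.
      generalize (Rabs_triang m1 m2). lra. }
    assert (2 * Rabs x <= 1 + x ^ 2) by (rewrite <- pow2_abs; generalize (pow2_ge_0 (Rabs x - 1)); nra).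
    generalize (Rabs_pos m1) (Rabs_pos m2) (pow2_ge_0 x). nra. }
  generalize (Rabs_pos (A1 - A2)) (Rabs_pos (m1 - m2)) (Rabs_pos (m1 + m2 - 2 * x)). intros.
  rewrite Rmult_plus_distr_r. apply Rplus_le_compat.
  - rewrite Rmult_assoc. apply Rmult_le_compat_l; lra.
  - replace (A2 * Rabs (m1 - m2) * (1 + Rabs m1 + Rabs m2) * (1 + x ^ 2))
      with (A2 * (Rabs (m1 - m2) * ((1 + Rabs m1 + Rabs m2) * (1 + x ^ 2)))) by ring.
    assert (Rabs (m1 - m2) * Rabs (m1 + m2 - 2 * x)
            <= Rabs (m1 - m2) * ((1 + Rabs m1 + Rabs m2) * (1 + x ^ 2)))
      by (apply Rmult_le_compat_l; lra).
    assert (0 <= Rabs (m1 - m2) * Rabs (m1 + m2 - 2 * x)) by (apply Rmult_le_pos; lra).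
    nra.
Qed.

Definition gauss_L1_gap (A1 m1 A2 m2 : R) : R :=
  Rabs (gauss_amp A1 - gauss_amp A2) / gauss_amp A1
  + quad_gap A1 m1 A2 m2
    * (gauss_amp A2 / gauss_amp A1 * (1 + (1 / A1 + m1 ^ 2)) + (1 + (1 / A2 + m2 ^ 2))).

Section Gaussian_L1_gap.

Variables A1 m1 A2 m2 : R.
Hypotheses (HA1 : 0 < A1) (HA2 : 0 < A2).

Definition gauss_sub_majorant (x : R) : R :=
  Rabs (gauss_amp A1 - gauss_amp A2) / gauss_amp A1 * gauss A1 m1 x
  + quad_gap A1 m1 A2 m2
    * (gauss_amp A2 / gauss_amp A1 * ((1 + x ^ 2) * gauss A1 m1 x) + (1 + x ^ 2) * gauss A2 m2 x).

Lemma abs_gauss_sub_le (x : R) :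
  Rabs (gauss A1 m1 x - gauss A2 m2 x) <= gauss_sub_majorant x.
Proof.
  assert (Hc1 := gauss_amp_pos A1 HA1). assert (Hc2 := gauss_amp_pos A2 HA2).
  assert (Hq := abs_quad_sub_le A1 m1 A2 m2 x (Rlt_le _ _ HA2)).
  unfold gauss_sub_majorant, gauss. fold (gauss_amp A1) (gauss_amp A2).
  set (p1 := - (A1 / 2) * (x - m1) ^ 2) in *. set (p2 := - (A2 / 2) * (x - m2) ^ 2) in *.
  assert (He := abs_exp_sub_le p1 p2).
  generalize (exp_pos p1) (exp_pos p2) (Rabs_pos (gauss_amp A1 - gauss_amp A2)).
  set (E1 := exp p1) in *. set (E2 := exp p2) in *.
  set (c1 := gauss_amp A1) in *. set (c2 := gauss_amp A2) in *. intros HE1 HE2 Hc.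
  replace (c1 * E1 - c2 * E2) with ((c1 - c2) * E1 + c2 * (E1 - E2)) by ring.
  eapply Rle_trans; [apply Rabs_triang|].
  rewrite !Rabs_mult, (Rabs_right E1), (Rabs_right c2) by lra.
  replace (Rabs (c1 - c2) / c1 * (c1 * E1) + quad_gap A1 m1 A2 m2
             * (c2 / c1 * ((1 + x ^ 2) * (c1 * E1)) + (1 + x ^ 2) * (c2 * E2)))
    with (Rabs (c1 - c2) * E1 + c2 * (quad_gap A1 m1 A2 m2 * (1 + x ^ 2) * (E1 + E2)))
    by (field; lra).
  apply Rplus_le_compat_l, Rmult_le_compat_l; [lra|].
  eapply Rle_trans; [exact He|]. apply Rmult_le_compat_r; lra.
Qed.

Lemma RInt_R_abs_gauss_sub_le :
  Rabs (RInt_R (fun x => Rabs (gauss A1 m1 x - gauss A2 m2 x))) <= gauss_L1_gap A1 m1 A2 m2.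
Proof.
  set (f := fun x => Rabs (gauss A1 m1 x - gauss A2 m2 x)).
  assert (Hcf : forall x, continuous f x).
  { intros x. apply continuous_Rabs_comp.
    apply (ex_derive_continuous (fun x => gauss A1 m1 x - gauss A2 m2 x)).
    unfold gauss. auto_derive. auto. }
  assert (Hcg : forall x, continuous gauss_sub_majorant x).
  { intros x. apply (ex_derive_continuous gauss_sub_majorant).
    unfold gauss_sub_majorant, gauss. auto_derive. auto. }
  assert (Hg : is_RInt_R gauss_sub_majorant (gauss_L1_gap A1 m1 A2 m2)).
  { unfold gauss_L1_gap.
    replace (Rabs (gauss_amp A1 - gauss_amp A2) / gauss_amp A1)
      with (Rabs (gauss_amp A1 - gauss_amp A2) / gauss_amp A1 * 1) by ring.
    apply (is_RInt_gen_plus (V := R_NormedModule)).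
    - apply (is_RInt_gen_scal (V := R_NormedModule)), is_RInt_R_gauss, HA1.
    - apply (is_RInt_gen_scal (V := R_NormedModule)), (is_RInt_gen_plus (V := R_NormedModule)).
      + apply (is_RInt_gen_scal (V := R_NormedModule)), is_RInt_R_one_add_sq_gauss, HA1.
      + apply is_RInt_R_one_add_sq_gauss, HA2. }
  assert (Hf : ex_RInt_R f).
  { apply (ex_RInt_R_le f gauss_sub_majorant (gauss_L1_gap A1 m1 A2 m2)); auto.
    intros x. split; [apply Rabs_pos | apply abs_gauss_sub_le]. }
  apply (RInt_gen_norm (Fa := Rbar_locally m_infty) (Fb := Rbar_locally p_infty)
           f gauss_sub_majorant); try apply Rbar_locally_filter; auto.
  - apply (Filter_prod _ _ _ (fun x => x < 0) (fun x => 0 < x)); try (exists 0; auto).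
    intros x y Hx Hy. simpl. lra.
  - apply filter_forall. intros ab x _. unfold norm. simpl. unfold abs. simpl.
    unfold f. rewrite Rabs_Rabsolu. apply abs_gauss_sub_le.
  - apply (RInt_gen_correct (V := R_CompleteNormedModule)), Hf.
Qed.

End Gaussian_L1_gap.

Lemma cosh_pos (x : R) : 0 < cosh x.
Proof. unfold cosh. generalize (exp_pos x) (exp_pos (- x)). lra. Qed.

Lemma sinh_nonneg (x : R) : 0 <= x -> 0 <= sinh x.
Proof. intros [Hx | <-]; [rewrite <- sinh_0; apply Rlt_le, sinh_lt, Hx | rewrite sinh_0; lra]. Qed.

Lemma tanh_nonneg (x : R) : 0 <= x -> 0 <= tanh x.
Proof. intros Hx. apply Rdiv_le_0_compat; [apply sinh_nonneg, Hx | apply cosh_pos]. Qed.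

Section Coefficients.

Variables sigma a : R.
Hypotheses (Hsigma : 0 < sigma) (Ha : 0 < a).

Lemma a_of_0 : a_of sigma a 0 = a.
Proof.
  unfold a_of, tanh. rewrite Rmult_0_r, sinh_0, cosh_0. field. lra.
Qed.

Lemma m_of_0 (m : R) : m_of sigma a m 0 = m.
Proof.
  unfold m_of. rewrite Rmult_0_r, sinh_0, cosh_0. field. split; lra.
Qed.

Lemma a_of_pos (s : R) : 0 <= s -> 0 < a_of sigma a s.
Proof.
  intros Hs. assert (HT := tanh_nonneg (2 * sigma * s) ltac:(nra)).
  assert (0 < a * sigma) by nra.
  apply Rdiv_lt_0_compat; [lra | apply Rmult_lt_0_compat; nra].
Qed.

Lemma is_derive_a_of (s : R) : 0 <= s ->
  is_derive (a_of sigma a) s (2 * (1 - sigma ^ 2 * a_of sigma a s ^ 2)).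
Proof.
  intros Hs. assert (HT := tanh_nonneg (2 * sigma * s) ltac:(nra)).
  assert (Hsh := sinh_nonneg (2 * sigma * s) ltac:(nra)).
  assert (Hch := cosh_pos (2 * sigma * s)).
  assert (0 < a * sigma) by nra.
  unfold a_of, tanh in *. auto_derive.
  - repeat split; apply Rgt_not_eq; [lra | lra | apply Rmult_lt_0_compat; nra].
  - field. repeat split; apply Rgt_not_eq; nra.
Qed.

Lemma is_derive_m_of (m s : R) : 0 <= s ->
  is_derive (m_of sigma a m) s (-2 * m_of sigma a m s / a_of sigma a s).
Proof.
  intros Hs. assert (Hsh := sinh_nonneg (2 * sigma * s) ltac:(nra)).
  assert (Hch := cosh_pos (2 * sigma * s)).
  assert (0 < a * sigma) by nra.
  assert (HD : 0 < a * sigma * cosh (2 * sigma * s) + sinh (2 * sigma * s)) by nra.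
  unfold m_of, a_of, tanh. auto_derive; [lra|].
  field. repeat split; apply Rgt_not_eq; nra.
Qed.

Lemma continuous_a_of (s : R) : 0 <= s -> continuous (a_of sigma a) s.
Proof. intros Hs. apply (ex_derive_continuous (a_of sigma a)). eexists. apply is_derive_a_of, Hs. Qed.

Lemma continuous_m_of (m s : R) : 0 <= s -> continuous (m_of sigma a m) s.
Proof. intros Hs. apply (ex_derive_continuous (m_of sigma a m)). eexists. apply is_derive_m_of, Hs. Qed.

End Coefficients.

Lemma is_derive_gauss_path (Af mf : R -> R) (t dA dm x : R) :
  is_derive Af t dA -> is_derive mf t dm -> 0 < Af t ->
  is_derive (fun s => gauss (Af s) (mf s) x) t
    (gauss (Af t) (mf t) x * (dA / (2 * Af t) - dA / 2 * (x - mf t) ^ 2 + Af t * dm * (x - mf t))).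
Proof.
  intros HA Hm Hpos. assert (HPI := PI_RGT_0).
  assert (HY : 0 < Af t / (2 * PI)) by (apply Rdiv_lt_0_compat; lra).
  unfold gauss. auto_derive.
  - repeat split; try (eexists; eassumption). exact HY.
  - replace (Derive (fun s : R => Af s) t) with dA by (symmetry; apply is_derive_unique, HA).
    replace (Derive (fun s : R => mf s) t) with dm by (symmetry; apply is_derive_unique, Hm).
    change (sqrt (Af t * / (2 * PI))) with (sqrt (Af t / (2 * PI))).
    assert (Hr : sqrt (Af t / (2 * PI)) ^ 2 = Af t / (2 * PI)) by (apply pow2_sqrt; lra).
    assert (Hr0 : 0 < sqrt (Af t / (2 * PI))) by (apply sqrt_lt_R0, HY).
    (* Writing Af t = 2 PI r^2 removes the square root, so [field] applies. *)
    set (r := sqrt (Af t / (2 * PI))) in *.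
    replace (Af t) with (2 * PI * r ^ 2) by (rewrite Hr; field; lra).
    unfold Rminus, Rdiv. cbn [pow]. field. lra.
Qed.

Lemma gauss_L1_gap_diag (A m : R) : 0 < A -> gauss_L1_gap A m A m = 0.
Proof.
  intros HA. assert (Hc := gauss_amp_pos A HA).
  unfold gauss_L1_gap, quad_gap. rewrite !Rminus_diag, !Rabs_R0. field. lra.
Qed.

Ltac continuity_R :=
  repeat match goal with
  | |- continuous (fun _ => _) _ => apply continuous_const
  | |- continuous (fun y => @?f y + @?g y) _ => apply (continuous_plus f g)
  | |- continuous (fun y => @?f y * @?g y) _ => apply (continuous_mult f g)
  | |- continuous (fun y => - @?f y) _ => apply (continuous_opp f)
  | |- continuous (fun y => / @?f y) _ => apply (continuous_Rinv_comp f)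
  | |- continuous (fun y => Rabs (@?f y)) _ => apply (continuous_Rabs_comp f)
  | |- continuous (fun y => sqrt (@?f y)) _ => apply (continuous_sqrt_comp f)
  end.

Lemma continuous_gauss_L1_gap (Af mf : R -> R) (t : R) :
  continuous Af t -> continuous mf t -> 0 < Af t ->
  continuous (fun s => gauss_L1_gap (Af s) (mf s) (Af t) (mf t)) t.
Proof.
  intros HA Hm Hpos. assert (Hc := gauss_amp_pos _ Hpos).
  unfold gauss_L1_gap, quad_gap, gauss_amp in *. unfold Rdiv, Rminus. cbn [pow].
  continuity_R; try assumption; lra.
Qed.

Section Solution.

Variables sigma a m : R.
Hypotheses (Hsigma : 0 < sigma) (Ha : 0 < a).

Lemma Rabs_u_sol (t x : R) : 0 <= t -> Rabs (u_sol sigma a m t x) = u_sol sigma a m t x.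
Proof. intros Ht. apply Rabs_right, Rle_ge, Rlt_le, gauss_pos, a_of_pos; assumption. Qed.

Lemma is_derive_u_sol (t x : R) : 0 <= t ->
  is_derive (fun s => u_sol sigma a m s x) t
    (sigma ^ 2 * Derive_n (u_sol sigma a m t) 2 x
     + (- x ^ 2 + (1 / a_of sigma a t + m_of sigma a m t ^ 2)) * u_sol sigma a m t x).
Proof.
  intros Ht. set (A := a_of sigma a t). set (M := m_of sigma a m t).
  assert (HA : 0 < A) by (apply a_of_pos; assumption).
  replace (Derive_n (u_sol sigma a m t) 2 x) with ((A ^ 2 * (x - M) ^ 2 - A) * gauss A M x)
    by (symmetry; apply is_derive_unique, is_derive_Derive_gauss).
  unfold u_sol. fold A M.
  replace (sigma ^ 2 * ((A ^ 2 * (x - M) ^ 2 - A) * gauss A M x)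
           + (- x ^ 2 + (1 / A + M ^ 2)) * gauss A M x)
    with (gauss A M x * (2 * (1 - sigma ^ 2 * A ^ 2) / (2 * A)
                         - 2 * (1 - sigma ^ 2 * A ^ 2) / 2 * (x - M) ^ 2
                         + A * (-2 * M / A) * (x - M)))
    by (field; lra).
  apply is_derive_gauss_path; [apply is_derive_a_of | apply is_derive_m_of | ]; assumption.
Qed.

Lemma is_lim_L1_u_sol (t : R) : 0 <= t ->
  filterlim (fun s => RInt_R (fun x => Rabs (u_sol sigma a m s x - u_sol sigma a m t x)))
    (within (fun s => 0 <= s) (locally t)) (locally 0).
Proof.
  intros Ht. assert (HA := a_of_pos sigma a Hsigma Ha t Ht).
  set (D := fun s =>
    gauss_L1_gap (a_of sigma a s) (m_of sigma a m s) (a_of sigma a t) (m_of sigma a m t)).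
  assert (HD0 : D t = 0) by apply gauss_L1_gap_diag, HA.
  assert (HD : continuous D t).
  { apply continuous_gauss_L1_gap; [apply continuous_a_of | apply continuous_m_of | ]; assumption. }
  apply (filterlim_le_le (fun s => - D s) _ D (Finite 0)).
  - unfold within. apply filter_forall. intros s Hs.
    apply Rabs_le_between, RInt_R_abs_gauss_sub_le; apply a_of_pos; assumption.
  - eapply filterlim_filter_le_1; [apply filter_le_within|].
    replace (Finite 0) with (Finite (- D t)) by (rewrite HD0, Ropp_0; reflexivity).
    apply (continuous_opp D), HD.
  - eapply filterlim_filter_le_1; [apply filter_le_within|].
    rewrite <- HD0. exact HD.
Qed.

Lemma continuous_one_add_moment (t : R) : 0 <= t ->
  continuous (fun s => 1 + (1 / a_of sigma a s + m_of sigma a m s ^ 2)) t.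
Proof.
  intros Ht. apply (ex_derive_continuous (fun s => 1 + (1 / a_of sigma a s + m_of sigma a m s ^ 2))).
  auto_derive. repeat split.
  - eexists. apply is_derive_a_of; assumption.
  - apply Rgt_not_eq, a_of_pos; assumption.
  - eexists. apply is_derive_m_of; assumption.
Qed.

Lemma ex_RInt_moment_u_sol (t1 t2 : R) : 0 < t1 -> t1 <= t2 ->
  ex_RInt (fun t => RInt_R (fun x => (1 + x ^ 2) * Rabs (u_sol sigma a m t x))) t1 t2.
Proof.
  intros Ht1 Ht12.
  apply (ex_RInt_ext (fun t => 1 + (1 / a_of sigma a t + m_of sigma a m t ^ 2))).
  - intros t Ht. rewrite Rmin_left, Rmax_right in Ht by lra. symmetry.
    apply is_RInt_gen_unique, (is_RInt_R_ext (fun x => (1 + x ^ 2) * u_sol sigma a m t x)).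
    + intros x. rewrite Rabs_u_sol; [reflexivity | lra].
    + apply is_RInt_R_one_add_sq_gauss, a_of_pos; auto; lra.
  - apply (ex_RInt_continuous (V := R_CompleteNormedModule)). intros t Ht.
    rewrite Rmin_left, Rmax_right in Ht by lra. apply continuous_one_add_moment; lra.
Qed.

End Solution.

Theorem proposition2p2 (sigma a m : R) (Hsigma : 0 < sigma) (Ha : 0 < a) :
  let u := u_sol sigma a m in
  (* initial condition: u(0,.) = u_0 *)
  (forall x, u 0 x = gauss a m x) /\
  (* the PDE holds classically for t > 0, x in R, with the nonlocal term
     M = int_R y^2 u(t,y) dy (which exists) *)
  (forall t, 0 < t ->
     exists M : R,
       is_RInt_gen (fun y => y ^ 2 * u t y)
         (Rbar_locally m_infty) (Rbar_locally p_infty) M /\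
       forall x,
         ex_derive_n (u t) 2 x /\
         is_derive (fun s => u s x) t
           (sigma ^ 2 * Derive_n (u t) 2 x + (- x ^ 2 + M) * u t x)) /\
  (* u belongs to the uniqueness class:
     u in C(R_+; L^1(R)) ... *)
  (forall t, 0 <= t ->
     ex_RInt_gen (fun x => Rabs (u t x)) (Rbar_locally m_infty) (Rbar_locally p_infty)) /\
  (forall t, 0 <= t ->
     filterlim
       (fun s => RInt_gen (fun x => Rabs (u s x - u t x))
                   (Rbar_locally m_infty) (Rbar_locally p_infty))
       (within (fun s => 0 <= s) (locally t)) (locally 0)) /\
  (* ... and u in L^1_loc((0,oo); {g in L^1 : int x^2 |g| < oo}) *)
  (forall t, 0 < t ->
     ex_RInt_gen (fun x => x ^ 2 * Rabs (u t x)) (Rbar_locally m_infty) (Rbar_locally p_infty)) /\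
  (forall t1 t2, 0 < t1 -> t1 <= t2 ->
     ex_RInt (fun t => RInt_gen (fun x => (1 + x ^ 2) * Rabs (u t x))
                         (Rbar_locally m_infty) (Rbar_locally p_infty)) t1 t2).
Proof.
  intros u. unfold u. clear u.
  assert (HA : forall t, 0 <= t -> 0 < a_of sigma a t) by (intros; apply a_of_pos; assumption).
  assert (Habs := Rabs_u_sol sigma a m Hsigma Ha).
  repeat split.
  - intros x. unfold u_sol. rewrite a_of_0, m_of_0; auto.
  - intros t Ht. exists (1 / a_of sigma a t + m_of sigma a m t ^ 2). split.
    + apply is_RInt_R_sq_gauss, HA. lra.
    + intros x. split.
      * eexists. apply is_derive_Derive_gauss.
      * apply is_derive_u_sol; auto; lra.
  - intros t Ht. exists 1. apply (is_RInt_R_ext (u_sol sigma a m t)).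
    + intros x. symmetry. apply Habs, Ht.
    + apply is_RInt_R_gauss, HA, Ht.
  - intros t Ht. apply is_lim_L1_u_sol; assumption.
  - intros t Ht. eexists. apply (is_RInt_R_ext (fun x => x ^ 2 * u_sol sigma a m t x)).
    + intros x. rewrite Habs; [reflexivity | lra].
    + apply is_RInt_R_sq_gauss, HA. lra.
  - apply ex_RInt_moment_u_sol; assumption.
Qed.
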